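(* Let $d\ge2$, $L\ge2$, $\sigma>0$, and $\lambda\in\,]0,\lambda^\star(\sigma,L)]$. Let $\mathcal{R}^<(\kappa_0,\kappa_1)=A(\kappa_0^4+\kappa_1^4)+B(\kappa_0^2+\kappa_1^2)+C\kappa_0^2\kappa_1^2+D$ on $[-1,1]^2$. Then every $(\kappa_0,\kappa_1)\in[-1,1]^2$ satisfying $$(1-\kappa_0^2)\,\partial_{\kappa_0}\mathcal{R}^<(\kappa_0,\kappa_1)=0,\qquad(1-\kappa_1^2)\,\partial_{\kappa_1}\mathcal{R}^<(\kappa_0,\kappa_1)=0$$ belongs to the set $\{(\pm1,\pm1),(0,\pm1),(\pm1,0),(0,0)\}$.
   Context: With $c_1(n)=1+n\sigma^2$, $c_2(n)=1+\sigma^2(d+n)$: $A=\frac{2\lambda^2}{L^2}c_2(8)+\frac{2\lambda^2(L-1)}{L^2}c_1(5)+\frac{\lambda^2(L-1)}{L^2}c_2(4)+\frac{\lambda^2(L-1)(L-2)}{2L^2}c_1(4)$, $B=-\frac{2\lambda}{L}c_2(4)+\frac{16\lambda^2\sigma^2}{L^2}c_2(6)+\frac{8\lambda^2\sigma^2(L-1)}{L^2}c_1(6)-\frac{\lambda(L-1)}{L}c_1(4)+\frac{4\lambda^2\sigma^2(L-1)}{L^2}c_2(3)+\frac{\lambda^2\sigma^2(L-1)(L-2)}{L^2}c_1(6)$, $C=\frac{4\lambda^2\sigma^2(L-1)}{L^2}$, $D$ a constant not affecting the derivatives. $c_3(\sigma,L)=16\sigma^2c_2(6)+8\sigma^2(L-1)c_1(6)+4\sigma^2(L-1)c_2(3)+\sigma^2(L-1)(L-2)c_1(6)+4c_2(8)+4(L-1)c_1(5)+2(L-1)c_2(4)+(L-1)(L-2)c_1(4)+4\sigma^2(L-1)$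 and $\lambda^\star(\sigma,L)=\frac{2Lc_2(4)+L(L-1)c_1(4)}{c_3(\sigma,L)}$. *)

From HB Require Import structures.
From mathcomp Require Import all_boot all_order all_algebra.
From mathcomp Require Import all_classical all_reals all_analysis.
Set Implicit Arguments. Unset Strict Implicit. Unset Printing Implicit Defensive.
Import Order.TTheory GRing.Theory Num.Theory.
Local Open Scope ring_scope.

Section Coeffs.
Variable R : realType.
Variables (d L : nat) (sigma lambda : R).

Definition c1 (n : R) : R := 1 + n * sigma ^+ 2.
Definition c2 (n : R) : R := 1 + sigma ^+ 2 * (d%:R + n).

Definition Lr : R := L%:R.

Definition coefA : R :=
  2 * lambda ^+ 2 / Lr ^+ 2 * c2 8
  + 2 * lambda ^+ 2 * (Lr - 1) / Lr ^+ 2 * c1 5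
  + lambda ^+ 2 * (Lr - 1) / Lr ^+ 2 * c2 4
  + lambda ^+ 2 * (Lr - 1) * (Lr - 2) / (2 * Lr ^+ 2) * c1 4.

Definition coefB : R :=
  - (2 * lambda / Lr) * c2 4
  + 16 * lambda ^+ 2 * sigma ^+ 2 / Lr ^+ 2 * c2 6
  + 8 * lambda ^+ 2 * sigma ^+ 2 * (Lr - 1) / Lr ^+ 2 * c1 6
  - lambda * (Lr - 1) / Lr * c1 4
  + 4 * lambda ^+ 2 * sigma ^+ 2 * (Lr - 1) / Lr ^+ 2 * c2 3
  + lambda ^+ 2 * sigma ^+ 2 * (Lr - 1) * (Lr - 2) / Lr ^+ 2 * c1 6.

Definition coefC : R := 4 * lambda ^+ 2 * sigma ^+ 2 * (Lr - 1) / Lr ^+ 2.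

Definition c3 : R :=
  16 * sigma ^+ 2 * c2 6 + 8 * sigma ^+ 2 * (Lr - 1) * c1 6
  + 4 * sigma ^+ 2 * (Lr - 1) * c2 3
  + sigma ^+ 2 * (Lr - 1) * (Lr - 2) * c1 6
  + 4 * c2 8 + 4 * (Lr - 1) * c1 5 + 2 * (Lr - 1) * c2 4
  + (Lr - 1) * (Lr - 2) * c1 4 + 4 * sigma ^+ 2 * (Lr - 1).

Definition lambda_star : R := (2 * Lr * c2 4 + Lr * (Lr - 1) * c1 4) / c3.

Definition Rlt (D : R) (k0 k1 : R) : R :=
  coefA * (k0 ^+ 4 + k1 ^+ 4) + coefB * (k0 ^+ 2 + k1 ^+ 2)
  + coefC * k0 ^+ 2 * k1 ^+ 2 + D.

End Coeffs.

From Pilot Require Import Defs.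
From HB Require Import structures.
From mathcomp Require Import all_boot all_order all_algebra.
From mathcomp Require Import all_classical all_reals all_analysis.
From mathcomp Require Import ring lra.
Set Implicit Arguments.
Unset Strict Implicit.
Unset Printing Implicit Defensive.

Import Order.TTheory GRing.Theory Num.Theory.
Local Open Scope ring_scope.

(* In each variable, R^< is the even quartic A x^4 + (B + C m^2) x^2 + const,
   where m is the other variable.  Away from x in {0, 1, -1} a critical point
   would need 2 A x^2 + B + C m^2 = 0; but for x^2 < 1 and m^2 <= 1 this
   quantity is strictly below 2 A + B + C, and 2 A + B + C <= 0 is, up to the
   positive factor lambda / L^2, exactly the condition lambda <= lambda^*. *)

Lemma derive1_even_quartic (R : realType) (a b c x : R) :
  derive1 (fun x => a * x ^+ 4 + b * x ^+ 2 + c) x = 4 * a * x ^+ 3 + 2 * b * x.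
Proof. by rewrite derive1E derive_val /GRing.scale /=; ring. Qed.

Lemma even_quartic_factor_lt0 (R : realFieldType) (A B C k m : R) :
  0 < A -> 0 <= C -> 2 * A + B + C <= 0 -> k ^+ 2 < 1 -> m ^+ 2 <= 1 ->
  2 * A * k ^+ 2 + B + C * m ^+ 2 < 0.
Proof. by move=> *; nra. Qed.

Lemma constrained_even_quartic_critical (R : realFieldType) (A B C k m : R) :
  0 < A -> 0 <= C -> 2 * A + B + C <= 0 -> -1 <= k <= 1 -> -1 <= m <= 1 ->
  (1 - k ^+ 2) * (4 * A * k ^+ 3 + 2 * (B + C * m ^+ 2) * k) = 0 ->
  k \in [:: 1; -1; 0].
Proof.
move=> A_gt0 C_ge0 ABC_le0 /andP[k_ge k_le] /andP[m_ge m_le] crit.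
have m2_le1 : m ^+ 2 <= 1 by rewrite expr2; nra.
have : k ^+ 2 <= 1 by rewrite expr2; nra.
rewrite le_eqVlt => /orP[k2_eq1 | k2_lt1].
  by move: k2_eq1; rewrite sqrf_eq1 !inE => /orP[] ->; rewrite ?orbT.
have factor_lt0 := even_quartic_factor_lt0 A_gt0 C_ge0 ABC_le0 k2_lt1 m2_le1.
have /eqP : 2 * k * ((1 - k ^+ 2) * (2 * A * k ^+ 2 + B + C * m ^+ 2)) = 0.
  by rewrite -crit; ring.
rewrite !mulf_eq0 pnatr_eq0 subr_eq0 (gt_eqF k2_lt1) (lt_eqF factor_lt0) /= orbF.
by move=> /eqP ->; rewrite !inE eqxx !orbT.
Qed.

Section Coefficients.
Variables (R : realType) (d L : nat) (sigma lambda : R).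
Local Notation l := (Lr R L).
Local Notation A := (coefA d L sigma lambda).
Local Notation B := (Defs.coefB d L sigma lambda).
Local Notation C := (Defs.coefC L sigma lambda).

Lemma c1_ge1 (n : R) : 0 <= n -> 1 <= c1 sigma n.
Proof. by move=> n_ge0; rewrite /c1 lerDl mulr_ge0 ?sqr_ge0. Qed.

Lemma c2_ge1 (n : R) : 0 <= n -> 1 <= c2 d sigma n.
Proof. by move=> n_ge0; rewrite /c2 lerDl mulr_ge0 ?sqr_ge0 ?addr_ge0. Qed.

Let c1_ge0 (n : R) : 0 <= n -> 0 <= c1 sigma n.
Proof. by move=> /c1_ge1; apply: le_trans. Qed.

Let c2_ge0 (n : R) : 0 <= n -> 0 <= c2 d sigma n.
Proof. by move=> /c2_ge1; apply: le_trans. Qed.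

Let c2_gt0 (n : R) : 0 <= n -> 0 < c2 d sigma n.
Proof. by move=> /c2_ge1; apply: lt_le_trans. Qed.

Lemma Lr_gt0 : (0 < L)%N -> 0 < l.
Proof. by rewrite /Lr ltr0n. Qed.

Lemma Lr_sub1_ge0 : (1 <= L)%N -> 0 <= l - 1.
Proof. by rewrite subr_ge0 /Lr ler1n. Qed.

Lemma Lr_sub2_ge0 : (2 <= L)%N -> 0 <= l - 2.
Proof. by rewrite subr_ge0 /Lr ler_nat. Qed.

Lemma coefA_gt0 : (2 <= L)%N -> 0 < lambda -> 0 < A.
Proof.
move=> L_ge2 lambda_gt0.
have l_gt0 := Lr_gt0 (ltnW L_ge2).
have u_ge0 := Lr_sub1_ge0 (ltnW L_ge2); have v_ge0 := Lr_sub2_ge0 L_ge2.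
rewrite /coefA -/l.
apply: ltr_wpDr; last apply: ltr_wpDr; last apply: ltr_wpDr.
all: rewrite ?(u_ge0, v_ge0, sqr_ge0, c1_ge0, c2_ge0, c2_gt0, divr_gt0, mulr_gt0,
               exprn_gt0, divr_ge0, mulr_ge0) //.
Qed.

Lemma coefC_ge0 : (1 <= L)%N -> 0 <= C.
Proof.
move=> L_ge1; have u_ge0 := Lr_sub1_ge0 L_ge1.
by rewrite /Defs.coefC -/l ?(u_ge0, sqr_ge0, divr_ge0, mulr_ge0).
Qed.

Lemma c3_gt0 : (2 <= L)%N -> 0 < c3 d L sigma.
Proof.
move=> L_ge2.
have u_ge0 := Lr_sub1_ge0 (ltnW L_ge2); have v_ge0 := Lr_sub2_ge0 L_ge2.
rewrite /c3 -/l.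
(* the summand 4 * c2 8 is positive, all the others are nonnegative *)
apply: ltr_wpDr; last apply: ltr_wpDr; last apply: ltr_wpDr; last apply: ltr_wpDr;
  last apply: ltr_wpDl.
all: rewrite ?(u_ge0, v_ge0, sqr_ge0, c1_ge0, c2_ge0, c2_gt0, mulr_gt0,
               mulr_ge0, addr_ge0) //.
Qed.

Lemma twice_coefA_add_coefB_add_coefC : (0 < L)%N ->
  2 * A + B + C =
  lambda / l ^+ 2 * (lambda * c3 d L sigma - (2 * l * c2 d sigma 4 + l * (l - 1) * c1 sigma 4)).
Proof.
move=> /Lr_gt0 l_gt0.
by rewrite /coefA /Defs.coefB /Defs.coefC /c3 -/l; field; rewrite gt_eqF.
Qed.

Lemma twice_coefA_add_coefB_add_coefC_le0 : (2 <= L)%N -> 0 < lambda ->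
  lambda <= lambda_star d L sigma -> 2 * A + B + C <= 0.
Proof.
move=> L_ge2 lambda_gt0.
rewrite /lambda_star -/l ler_pdivlMr ?c3_gt0 // -subr_le0 => lambda_le.
rewrite twice_coefA_add_coefB_add_coefC ?(ltnW L_ge2) //.
by apply: mulr_ge0_le0; rewrite // divr_ge0 ?sqr_ge0 ?ltW.
Qed.

Lemma Rlt_sym (D x y : R) :
  Rlt d L sigma lambda D x y = Rlt d L sigma lambda D y x.
Proof. by rewrite /Rlt; ring. Qed.

Lemma derive1_Rlt (D m k : R) :
  derive1 (fun x => Rlt d L sigma lambda D x m) k =
  4 * A * k ^+ 3 + 2 * (B + C * m ^+ 2) * k.
Proof.
pose q x := A * x ^+ 4 + (B + C * m ^+ 2) * x ^+ 2 + (A * m ^+ 4 + B * m ^+ 2 + D).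
have -> : (fun x => Rlt d L sigma lambda D x m) = q.
  by apply/funext => x; rewrite /Rlt /q; ring.
exact: derive1_even_quartic.
Qed.

End Coefficients.

Theorem proposition12 (R : realType) (d L : nat) (sigma lambda D : R) :
  (2 <= d)%N -> (2 <= L)%N -> 0 < sigma ->
  0 < lambda -> lambda <= lambda_star d L sigma ->
  forall k0 k1 : R, -1 <= k0 <= 1 -> -1 <= k1 <= 1 ->
  (1 - k0 ^+ 2) * derive1 (fun x => Rlt d L sigma lambda D x k1) k0 = 0 ->
  (1 - k1 ^+ 2) * derive1 (fun y => Rlt d L sigma lambda D k0 y) k1 = 0 ->
  (k0 \in [:: 1; -1; 0]) && (k1 \in [:: 1; -1; 0]).
Proof.
move=> _ L_ge2 _ lambda_gt0 lambda_le k0 k1 k0_bd k1_bd crit0 crit1.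
have A_gt0 := coefA_gt0 d sigma L_ge2 lambda_gt0.
have C_ge0 := coefC_ge0 sigma lambda (ltnW L_ge2).
have ABC_le0 := twice_coefA_add_coefB_add_coefC_le0 L_ge2 lambda_gt0 lambda_le.
have swap : (fun y => Rlt d L sigma lambda D k0 y) = (fun y => Rlt d L sigma lambda D y k0).
  by apply/funext => y; rewrite Rlt_sym.
rewrite derive1_Rlt in crit0; rewrite swap derive1_Rlt in crit1.
by rewrite (constrained_even_quartic_critical A_gt0 C_ge0 ABC_le0 k0_bd k1_bd crit0)
  (constrained_even_quartic_critical A_gt0 C_ge0 ABC_le0 k1_bd k0_bd crit1).
Qed.
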